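(* Let $\mathcal G$ be a melonic 1PI Feynman graph with $2N$ external edges and more than one vertex in the quartic melonic $U(1)^6$ model with closure constraint. Then its external black and white nodes can be grouped into $N$ $(d-1)$-dipoles ($d=6$), and $\mathcal G$ has $N$ external (open) faces all of the same color, whose boundaries connect pairwise external nodes belonging to different external $(d-1)$-dipoles.
   Context: Feynman graphs are built from quartic melonic vertices (bipartite 6-colored bubbles $b_2^{(i)}$ with two black and two white nodes) joined by dotted propagator edges of color $0$; external edges are dotted half-edges hooked to external nodes. A face is a maximal bicolored path or cycle of edges of colors $\{0,j\}$; it is external (open) if it is an open path. A $k$-dipole is a pair of a black and a white node joined by $k$ colored edges (for a $(d-1)$-dipole: all colors but one). A graph is melonic if it is a leading order graph, i.e. obtained from a vacuum graph whose intermediate field ($\Theta$-) representation is a tree (loop vertices = cycles of dotted edges, colored edges = original vertices) by optimally deleting tadpole dotted edges along boundaries of open faces; 1PI means one-particle irreducible (connected after cutting any single dotted edge). *)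

(* Combinatorial encoding of Feynman graphs of the quartic
   melonic U(1)^6 model (d = 6).  Colours 1..6 are encoded as 'I_6. *)
From mathcomp Require Import all_boot.
Set Implicit Arguments. Unset Strict Implicit. Unset Printing Implicit Defensive.

(* A node is (vertex, position); positions 0,2 are black, 1,3 are white.
   In a vertex b_2^(i) (i = vcol v): nodes 0-1 and 2-3 are joined by all
   colours but i; the colour-i edges join 0-3 and 1-2. *)
Definition node (V : nat) := ('I_V * 'I_4)%type.

Record feyngraph (V : nat) := FGraph {
  vcol : 'I_V -> 'I_6;
  prop : node V -> option (node V)         (* dotted (colour 0) edges; None = external half-edge *)
}.

Definition black V (x : node V) : bool := ~~ odd x.2.

Definition wf_graph V (G : feyngraph V) : Prop :=
  forall x y, prop G x = Some y -> prop G y = Some x /\ black x != black y.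

Definition external V (G : feyngraph V) (x : node V) : bool := prop G x == None.
Definition ext_nodes V (G : feyngraph V) : {set node V} := [set x | external G x].

Definition cpart V (G : feyngraph V) (j : 'I_6) (x : node V) : node V :=
  (x.1, if j == vcol G x.1 then rev_ord x.2
        else inord (if odd x.2 then (x.2 : nat).-1 else (x.2 : nat).+1)).

(* bicoloured {0,j} adjacency *)
Definition facerel V (G : feyngraph V) (j : 'I_6) : rel (node V) :=
  fun x y => (y == cpart G j x) || (prop G x == Some y).

Definition face_of V (G : feyngraph V) (j : 'I_6) (x : node V) : {set node V} :=
  [set y | connect (facerel G j) x y].

Definition closed_faces_j V (G : feyngraph V) (j : 'I_6) : {set {set node V}} :=
  [set C | [exists x, (C == face_of G j x) && [forall y in C, ~~ external G y]]].
Definition open_faces_j V (G : feyngraph V) (j : 'I_6) : {set {set node V}} :=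
  [set C | [exists x, (C == face_of G j x) && [exists y in C, external G y]]].

Definition n_closed_faces V (G : feyngraph V) : nat :=
  \sum_(j : 'I_6) #|closed_faces_j G j|.

(* the open face of colour j starting at the external node x ends at the
   external node y *)
Definition face_step V (G : feyngraph V) (j : 'I_6) (o : option (node V)) :=
  obind (fun z => prop G (cpart G j z)) o.
Definition face_connects V (G : feyngraph V) (j : 'I_6) (x y : node V) : Prop :=
  external G x /\
  exists n z, iter n (face_step G j) (Some x) = Some z /\
              cpart G j z = y /\ external G y.

Definition dipole V (G : feyngraph V) (j : 'I_6) (b w : node V) : Prop :=
  black b /\ ~~ black w /\ forall k : 'I_6, k != j -> cpart G k b = w.

Definition grel V (G : feyngraph V) : rel (node V) :=
  fun x y => (x.1 == y.1) || (prop G x == Some y).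
Definition connected V (G : feyngraph V) : Prop :=
  forall x y, connect (grel G) x y.
Definition grel_cut V (G : feyngraph V) (a b : node V) : rel (node V) :=
  fun x y => (x.1 == y.1) ||
             ((prop G x == Some y) && ~~ (((x == a) && (y == b)) || ((x == b) && (y == a)))).
Definition onePI V (G : feyngraph V) : Prop :=
  connected G /\
  forall a b, prop G a = Some b -> forall x y, connect (grel_cut G a b) x y.

(* intermediate field (Theta) representation of a vacuum graph:
   dipoles (v,h) = nodes (v,2h) black, (v,2h+1) white;
   loop vertices = cycles dipole -> dotted edge -> next dipole;
   Theta edges = original vertices joining their two dipoles. *)
Definition dip (V : nat) := ('I_V * bool)%type.
Definition dblack V (D : dip V) : node V := (D.1, inord (2 * D.2)).
Definition dwhite V (D : dip V) : node V := (D.1, inord (2 * D.2).+1).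
Definition looprel V (G : feyngraph V) : rel (dip V) :=
  fun D E => (prop G (dwhite D) == Some (dblack E)) || (prop G (dwhite E) == Some (dblack D)).
Definition loop_vertices V (G : feyngraph V) : {set {set dip V}} :=
  [set C | [exists D, C == [set E | connect (looprel G) D E]]].
Definition thetarel V (G : feyngraph V) : rel (dip V) :=
  fun D E => looprel G D E || (D.1 == E.1).
Definition theta_tree V (G : feyngraph V) : Prop :=
  (forall D E, connect (thetarel G) D E) /\ #|loop_vertices G| = V.+1.

Definition vacuum V (G : feyngraph V) : Prop := forall x, prop G x <> None.

Definition deletes_from V (G0 G : feyngraph V) : Prop :=
  vcol G =1 vcol G0 /\ forall x y, prop G x = Some y -> prop G0 x = Some y.

Definition from_tree V (G : feyngraph V) : Prop :=
  exists G0, wf_graph G0 /\ vacuum G0 /\ theta_tree G0 /\ deletes_from G0 G.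

(* melonic = leading order: obtained from a tree vacuum graph by deleting
   dotted edges, optimally, i.e. with the maximal number of closed faces
   among all connected graphs so obtained with the same number of vertices
   and external edges. *)
Definition melonic V (G : feyngraph V) : Prop :=
  wf_graph G /\ from_tree G /\
  forall G' : feyngraph V, wf_graph G' -> from_tree G' -> connected G' ->
    #|ext_nodes G'| = #|ext_nodes G| -> n_closed_faces G' <= n_closed_faces G.

From Pilot Require Import Defs.
From mathcomp Require Import all_boot all_fingroup zify.
Set Implicit Arguments. Unset Strict Implicit. Unset Printing Implicit Defensive.

(* A vertex v carries two "dipoles" D = (v,h): black node (v,2h) and white node
   (v,2h+1), joined by every colour but vcol v.  In the vacuum graph G0 from which
   the melonic graph G is cut out, the white node of D is matched to the black
   node of [loopPerm D] for a permutation [loopPerm] of dipoles whose cycles are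
   the loop vertices of the intermediate-field representation.  The colour-j
   faces of G0 are the cycles of [facePerm S = loopPerm \o twist S], where
   [twist S] exchanges the two dipoles of every vertex of colour j (S).  When
   the intermediate field graph is a tree (V edges, V+1 loop vertices), adding
   the vertices of S one at a time splits one cycle each time, so
   #cycles (facePerm S) + #|S| = V+1.

   For a 1PI graph G, every dipole with an external white node is a tadpole of
   G0 ([loopPerm D = D]); hence the external nodes are exactly the nodes of the
   set [extDip] of such dipoles.  Counting closed faces colour by colour gives
       n_closed G + 5 #|extDip| + excess + V <= 6 (V+1),
   while recolouring every vertex with a single colour yields a competitor G'
   with  n_closed G' + 5 #|extDip| >= 5 (V+1).  Optimality of G forces
   excess <= 1: all external dipoles miss the same colour j and lie on a single
   cycle of the colour-j face permutation.  The theorem follows: the pairs of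
   nodes of external dipoles are the (d-1)-dipoles, open colour-j faces are in
   bijection with external dipoles (each has a unique "head"), and an open face
   never joins the two nodes of the same external dipole once there are two. *)

Lemma connect_forward_ind (T : finType) (e : rel T) (P : T -> Prop) :
  (forall u w, P u -> e u w -> P w) -> forall x y, P x -> connect e x y -> P y.
Proof.
move=> stepP x y Px /connectP[p ep ->]; elim: p x Px ep => //= z p IH x Px /andP[exz ep].
exact: IH (stepP _ _ Px exz) ep.
Qed.

Lemma connect_map (T U : finType) (e : rel T) (e' : rel U) (f : T -> U) :
  (forall x y, e x y -> connect e' (f x) (f y)) ->
  forall x y, connect e x y -> connect e' (f x) (f y).
Proof.
move=> edge x y; apply: (connect_forward_ind (P := fun z => connect e' (f x) (f z))) => //.
by move=> u w cu euw; apply: connect_trans cu (edge _ _ euw).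
Qed.

Lemma card_imset_factor (T U : finType) (f g : T -> U) (F : {set T}) :
  {in F &, forall x y, g x = g y -> f x = f y} -> #|f @: F| <= #|g @: F|.
Proof.
move=> fact; case: (set_0Vmem F) => [->|[x0 x0F]]; first by rewrite !imset0 cards0.
pose h u := if [pick x in F | g x == u] is Some x then f x else f x0.
suff ->: f @: F = h @: (g @: F) by apply: leq_imset_card.
have hg x : x \in F -> h (g x) = f x.
  move=> xF; rewrite /h; case: pickP => [z /andP[zF /eqP gz]|]; first exact: fact.
  by move/(_ x); rewrite xF eqxx.
apply/setP=> u; apply/imsetP/imsetP => [[x xF ->]|[w /imsetP[x xF ->] ->]].
  by exists (g x); [exact: imset_f | rewrite hg].
by exists x => //; rewrite hg.
Qed.

Section ComponentCount.
Variable T : finType.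
Implicit Types (r : rel T) (x y : T).

Definition comp_of r x := [set y | connect r x y].
Definition ncomps r := #|[set comp_of r x | x in T]|.

Lemma comp_of_eq r : connect_sym r -> forall x y, (comp_of r x == comp_of r y) = connect r x y.
Proof.
move=> sym x y; apply/eqP/idP => [e|cxy].
  have: y \in comp_of r y by rewrite inE connect0.
  by rewrite -e inE.
apply/setP=> z; rewrite !inE; apply/idP/idP => cz.
  by apply: connect_trans cz; rewrite sym.
exact: connect_trans cxy cz.
Qed.

Lemma ncomps_eq r r' : connect r =2 connect r' -> ncomps r = ncomps r'.
Proof.
move=> E; have Ecomp: comp_of r =1 comp_of r' by move=> x; apply/setP => y; rewrite !inE E.
by rewrite /ncomps (eq_imset _ Ecomp).
Qed.

Definition adds_edge r r' a b :=
  subrel r r' /\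
  forall x y, r' x y -> r x y \/ ((x == a) || (x == b)) /\ ((y == a) || (y == b)).

Lemma ncomps_add_edge r r' a b : connect_sym r -> adds_edge r r' a b ->
  ncomps r <= (ncomps r').+1.
Proof.
move=> sym [_ new].
pose F := [set x | ~~ connect r a x].
have cover: [set comp_of r x | x in T] \subset comp_of r a |: [set comp_of r x | x in F].
  apply/subsetP=> C /imsetP[x _ ->]; apply/setU1P.
  case cax: (connect r a x); [left | right].
    by apply/eqP; rewrite comp_of_eq // sym.
  by apply: imset_f; rewrite inE cax.
have merge: #|[set comp_of r x | x in F]| <= #|[set comp_of r' x | x in F]|.
  apply: card_imset_factor => x y xF yF e.
  have: y \in comp_of r' x by rewrite e inE connect0.
  rewrite inE => cxy; apply/eqP; rewrite comp_of_eq //.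
  move: xF yF; rewrite !inE => xF yF.
  pose P u := connect r x u \/ (connect r x b /\ connect r a u).
  have: P y.
    apply: (connect_forward_ind (e := r') (P := P)) cxy; last by left; exact: connect0.
    move=> u w Pu /new [ruw|[hu hw]].
      case: Pu => [c|[c1 c2]]; first by left; exact: connect_trans c (connect1 ruw).
      by right; split => //; exact: connect_trans c2 (connect1 ruw).
    have notxa: ~~ connect r x a by rewrite sym.
    have xb: connect r x b.
      case: Pu => [c|[c _]] //.
      by case/orP: hu => /eqP hu; subst u => //; rewrite c in notxa.
    by case/orP: hw => /eqP ->; [right; split => //; exact: connect0 | left].
  by case=> // -[_ c]; rewrite c in yF.
have sub: #|[set comp_of r' x | x in F]| <= ncomps r'.
  by apply: subset_leq_card; apply: imsetS; apply/subsetP.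
apply: leq_trans (subset_leq_card cover) _.
rewrite cardsU1; case: (_ \notin _) => /=; rewrite ?add0n;
  [ | apply: leq_trans (leqnSn _)]; apply: leq_trans merge _; rewrite ?ltnS //.
Qed.

Lemma ncomps_add_inner_edge r r' a b : connect_sym r -> adds_edge r r' a b ->
  connect r a b -> ncomps r' = ncomps r.
Proof.
move=> sym [sub new] cab; apply: ncomps_eq => x y; apply/idP/idP.
  apply: connect_sub => u w /new [/connect1 //|[/orP[]/eqP-> /orP[]/eqP->]] //;
    by rewrite ?connect0 // sym.
by apply: connect_sub => u w /sub /connect1.
Qed.

Lemma porbit_next (p : {perm T}) x : porbit p (p x) = porbit p x.
Proof. by rewrite -(porbit_perm p 1 x) expg1. Qed.

Lemma porbit_fixed (p : {perm T}) x : p x = x -> porbit p x = [set x].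
Proof.
move=> px; apply/setP => y; rewrite inE; apply/porbitP/eqP => [[i ->]|->].
  by elim: i => [|i IH]; rewrite ?expg0 ?perm1 // expgSr permM IH px.
by exists 0; rewrite expg0 perm1.
Qed.

Lemma porbit_iter (p : {perm T}) x y : y \in porbit p x -> exists n, iter n p x = y.
Proof. by rewrite porbit_traject => /trajectP[i _ ->]; exists i. Qed.

Definition permrel (p : {perm T}) : rel T := fun x y => (p x == y) || (p y == x).

Lemma connect_permrel p x y : connect (permrel p) x y = (y \in porbit p x).
Proof.
apply/idP/idP.
  apply: (connect_forward_ind (P := fun u => u \in porbit p x)); last exact: porbit_id.
  move=> u w ux /orP[]/eqP e.
    by rewrite -e -eq_porbit_mem porbit_next eq_porbit_mem.
  by rewrite -eq_porbit_mem -(porbit_next p w) e eq_porbit_mem.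
case/porbitP=> i ->; elim: i => [|i IH]; first by rewrite expg0 perm1 connect0.
by apply: connect_trans IH (connect1 _); rewrite /permrel expgSr permM eqxx.
Qed.

Lemma ncomps_permrel p : ncomps (permrel p) = #|porbits p|.
Proof.
have E: comp_of (permrel p) =1 porbit p.
  by move=> x; apply/setP => y; rewrite inE connect_permrel.
by rewrite /ncomps (eq_imset _ E).
Qed.

End ComponentCount.

Section DipoleEncoding.
Variable V : nat.
Implicit Types (x y : node V) (D E : dip V).

Definition dip_of x : dip V := (x.1, 1 < x.2).
Definition flipd D : dip V := (D.1, ~~ D.2).

Lemma flipd_neq D : flipd D != D.
Proof. by case: D => v []; rewrite /flipd /= xpair_eqE eqxx. Qed.

Lemma dip_of_dblack D : dip_of (dblack D) = D.
Proof. by case: D => v []; rewrite /dip_of /dblack /= inordK. Qed.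

Lemma dip_of_dwhite D : dip_of (dwhite D) = D.
Proof. by case: D => v []; rewrite /dip_of /dwhite /= inordK. Qed.

Lemma black_dblack D : black (dblack D).
Proof. by case: D => v []; rewrite /black /dblack /= inordK. Qed.

Lemma black_dwhite D : black (dwhite D) = false.
Proof. by case: D => v []; rewrite /black /dwhite /= inordK. Qed.

Lemma dblackE x : black x -> dblack (dip_of x) = x.
Proof.
case: x => v [[|[|[|[|i]]]] Hi] //= _; rewrite /dblack /dip_of /=; congr pair;
  apply: val_inj; rewrite /= inordK //.
Qed.

Lemma dwhiteE x : ~~ black x -> dwhite (dip_of x) = x.
Proof.
case: x => v [[|[|[|[|i]]]] Hi] //= _; rewrite /dwhite /dip_of /=; congr pair;
  apply: val_inj; rewrite /= inordK //.
Qed.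

Lemma dblack_inj : injective (@dblack V).
Proof. by move=> D E e; rewrite -(dip_of_dblack D) e dip_of_dblack. Qed.

Lemma dwhite_inj : injective (@dwhite V).
Proof. by move=> D E e; rewrite -(dip_of_dwhite D) e dip_of_dwhite. Qed.

Lemma dblack_dwhite D E : dblack D != dwhite E.
Proof. by apply/eqP=> e; move: (black_dblack D); rewrite e black_dwhite. Qed.

Definition twist (S : {set 'I_V}) D : dip V := if D.1 \in S then flipd D else D.

Lemma twistK S : involutive (twist S).
Proof. by case=> v b; rewrite /twist /flipd /=; case vS: (v \in S); rewrite /= ?vS ?negbK. Qed.

Lemma twist_inj S : injective (twist S).
Proof. exact: inv_inj (@twistK S). Qed.

Lemma twist0 D : twist set0 D = D.
Proof. by rewrite /twist inE. Qed.

Definition colour_set (H : feyngraph V) (j : 'I_6) : {set 'I_V} := [set v | j == vcol H v].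

Lemma cpart_dblack H j D : cpart H j (dblack D) = dwhite (twist (colour_set H j) D).
Proof.
case: D => v b; rewrite /cpart /twist /colour_set inE /= /flipd /=.
by case: (j == vcol H v); case: b; congr pair; apply: val_inj; rewrite /= !inordK.
Qed.

Lemma cpart_dwhite H j D : cpart H j (dwhite D) = dblack (twist (colour_set H j) D).
Proof.
case: D => v b; rewrite /cpart /twist /colour_set inE /= /flipd /=.
by case: (j == vcol H v); case: b; congr pair; apply: val_inj; rewrite /= !inordK.
Qed.

Lemma cpart_black H j x : black (cpart H j x) = ~~ black x.
Proof.
case bx: (black x).
  by rewrite -(dblackE bx) cpart_dblack black_dwhite.
by rewrite -(dwhiteE (negbT bx)) cpart_dwhite black_dblack.
Qed.

Lemma cpartK (H : feyngraph V) j : involutive (cpart H j).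
Proof.
move=> x; case bx: (black x).
  by rewrite -(dblackE bx) cpart_dblack cpart_dwhite twistK.
by rewrite -(dwhiteE (negbT bx)) cpart_dwhite cpart_dblack twistK.
Qed.

End DipoleEncoding.

Section GluedCycles.
Variable V : nat.
Implicit Types (D E : dip V) (S : {set 'I_V}) (p : {perm dip V}).

(* The graph on dipoles whose edges are the steps of p together with the pairs
   of dipoles of the vertices in S; for p the loop permutation and S = setT it
   is the intermediate field graph. *)
Definition glue p S : rel (dip V) :=
  fun D E => permrel p D E || ((D.1 == E.1) && (D.1 \in S)).

Lemma glue_sym p S : connect_sym (glue p S).
Proof.
apply: sym_connect_sym => D E; rewrite /glue /permrel.
case: (eqVneq D.1 E.1) => [e|ne] /=; first by rewrite e /= [(p E == D) || _]orbC.
by rewrite !orbF orbC.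
Qed.

Lemma glue_adds_edge p S v :
  adds_edge (glue p S) (glue p (v |: S)) (v,false) (v,true).
Proof.
split=> [D E|D E]; rewrite /glue.
  by case/orP => [->//|/andP[e h]]; rewrite e in_setU1 h !orbT.
case/orP => [->|/andP[/eqP e]]; first by left.
rewrite in_setU1 => /orP[/eqP ev|->]; last by left; rewrite e eqxx orbT.
right; case: D E e ev => d1 d2 [e1 e2] /= <- ->.
by split; case: d2; case: e2; rewrite ?eqxx ?orbT.
Qed.

Lemma ncomps_glue_mono p S S' : S \subset S' ->
  ncomps (glue p S) <= ncomps (glue p S') + #|S' :\: S|.
Proof.
move=> sub; move e: #|S' :\: S| => n; elim: n S e sub => [|n IH] S e sub.
  have ->: S = S'.
    apply/eqP; rewrite eqEsubset sub /=; apply/subsetP => v vS'.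
    by apply: contraT => vS; move: e; rewrite (cardsD1 v) inE vS vS'.
  by rewrite addn0.
have [v vD]: exists v, v \in S' :\: S by apply/set0Pn; rewrite -card_gt0 e.
move: (vD); rewrite inE => /andP[vS vS'].
have e': #|S' :\: (v |: S)| = n.
  have -> : S' :\: (v |: S) = (S' :\: S) :\ v.
    by apply/setP => w; rewrite !inE; case: (w == v).
  by move: e; rewrite (cardsD1 v) vD add1n => -[].
have sub': v |: S \subset S' by rewrite subUset sub sub1set vS'.
apply: leq_trans (ncomps_add_edge (glue_sym p S) (glue_adds_edge p S v)) _.
by rewrite addnS ltnS; apply: IH.
Qed.

Lemma ncomps_glue0 p : ncomps (glue p set0) = #|porbits p|.
Proof.
rewrite -ncomps_permrel; apply: ncomps_eq; apply: eq_connect => D E.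
by rewrite /glue inE andbF orbF.
Qed.

Lemma ncomps_le1 p S : (forall D E, connect (glue p S) D E) -> ncomps (glue p S) <= 1.
Proof.
move=> c; rewrite -(cards1 (setT : {set dip V})); apply: subset_leq_card.
apply/subsetP => C /imsetP[D _ ->]; rewrite inE; apply/eqP/setP => E.
by rewrite !inE c.
Qed.

Lemma porbits_connected p : (forall D E, connect (glue p setT) D E) -> #|porbits p| <= V.+1.
Proof.
move=> c; rewrite -ncomps_glue0.
have := ncomps_glue_mono p (sub0set setT); rewrite setD0 cardsT card_ord.
by move: (ncomps_le1 c); lia.
Qed.

End GluedCycles.

Section LoopPermutation.
Variables (V : nat) (G0 : feyngraph V).
Hypotheses (wf0 : wf_graph G0) (vac0 : vacuum G0).
Implicit Types (x y : node V) (D E : dip V) (S : {set 'I_V}).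

(* In a vacuum graph the white node of D is matched with the black node of the
   next dipole along its loop vertex. *)
Definition loop_next D : dip V := dip_of (odflt (dwhite D) (prop G0 (dwhite D))).

Lemma prop_white_next D : prop G0 (dwhite D) = Some (dblack (loop_next D)).
Proof.
rewrite /loop_next; case h: (prop G0 (dwhite D)) => [y|]; last by case: (vac0 h).
have [_ bxy]:= wf0 h; have by_: black y by move: bxy; rewrite black_dwhite; case: (black y).
by rewrite /= dblackE.
Qed.

Lemma loop_next_inj : injective loop_next.
Proof.
move=> D E e; have hD := prop_white_next D; have hE := prop_white_next E.
rewrite e in hD; have [hD' _] := wf0 hD; have [hE' _] := wf0 hE.
by apply: dwhite_inj; move: hD'; rewrite hE' => /(congr1 (odflt (dwhite D))) /= ->.
Qed.

Definition loopPerm : {perm dip V} := perm loop_next_inj.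

Lemma prop_white D : prop G0 (dwhite D) = Some (dblack (loopPerm D)).
Proof. by rewrite permE prop_white_next. Qed.

Lemma prop_black D : prop G0 (dblack (loopPerm D)) = Some (dwhite D).
Proof. by have [] := wf0 (prop_white D). Qed.

Lemma prop_cases x y : prop G0 x = Some y ->
  (exists F, x = dwhite F /\ y = dblack (loopPerm F)) \/
  (exists F, x = dblack (loopPerm F) /\ y = dwhite F).
Proof.
move=> h; have [h' bxy] := wf0 h.
case bx: (black x).
  have by0: ~~ black y by move: bxy; rewrite bx; case: (black y).
  right; exists (dip_of y); rewrite dwhiteE //; split => //.
  by have := prop_white (dip_of y); rewrite dwhiteE // h' => /(congr1 (odflt x)) /= ->.
left; exists (dip_of x); rewrite dwhiteE ?bx //; split => //.
by have := prop_white (dip_of x); rewrite dwhiteE ?bx // h => /(congr1 (odflt y)) /= ->.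
Qed.

Lemma looprel_permrel : looprel G0 =2 permrel loopPerm.
Proof.
move=> D E; rewrite /looprel /permrel !prop_white.
by rewrite !(inj_eq (@Some_inj _)) !(inj_eq (@dblack_inj V)).
Qed.

(* The faces of colour j of G0 are the cycles of the face permutation for the
   set S of colour-j vertices: a face leaves D by its white node, which the
   colour-j edge sends to dipole [twist S D], then follows a dotted edge. *)
Definition facePerm S : {perm dip V} := (perm (@twist_inj V S) * loopPerm)%g.

Lemma facePermE S D : facePerm S D = loopPerm (twist S D).
Proof. by rewrite permM; congr (fun_of_perm loopPerm _); rewrite permE. Qed.

Lemma facePerm0 : facePerm set0 = loopPerm.
Proof. by apply/permP => D; rewrite facePermE twist0. Qed.

Lemma facePerm_add S v : v \notin S ->
  facePerm (v |: S) = (tperm (v,false) (v,true) * facePerm S)%g.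
Proof.
move=> vS; apply/permP => D; rewrite facePermE permM facePermE.
congr (fun_of_perm loopPerm _).
case: D => w b; rewrite /twist /flipd in_setU1 /=.
case: (eqVneq w v) => [->|wv] /=.
  by case: b; rewrite ?tpermL ?tpermR /= (negbTE vS).
by rewrite tpermD //; apply/eqP => -[] e; rewrite e eqxx in wv.
Qed.

Lemma porbit_facePerm_glue S D E :
  E \in porbit (facePerm S) D -> connect (glue loopPerm S) D E.
Proof.
case/porbitP => i ->; elim: i => [|i IH]; first by rewrite expg0 perm1 connect0.
apply: connect_trans IH _; rewrite expgSr permM; move: ((facePerm S ^+ i)%g D) => F.
rewrite facePermE; apply: (@connect_trans _ _ (twist S F)).
  rewrite /twist; case FS: (F.1 \in S); last exact: connect0.
  by apply: connect1; rewrite /glue /= eqxx FS orbT.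
by apply: connect1; rewrite /glue /permrel eqxx.
Qed.

End LoopPermutation.

Section TreeCount.
Variables (V : nat) (G0 : feyngraph V).
Hypotheses (wf0 : wf_graph G0) (vac0 : vacuum G0) (tree : theta_tree G0).
Implicit Types (D E : dip V) (S : {set 'I_V}).

Local Notation loopPerm := (loopPerm wf0 vac0).
Local Notation facePerm := (facePerm wf0 vac0).

Lemma card_loops : #|porbits loopPerm| = V.+1.
Proof.
rewrite -(proj2 tree) -ncomps_permrel /ncomps; apply: eq_card => C.
rewrite /loop_vertices inE; apply/imsetP/existsP => [[D _ ->]|[D /eqP ->]]; exists D => //.
  by apply/eqP/setP => E; rewrite !inE (eq_connect (looprel_permrel wf0 vac0)).
by apply/setP => E; rewrite !inE (eq_connect (looprel_permrel wf0 vac0)).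
Qed.

Lemma glue_connected D E : connect (glue loopPerm setT) D E.
Proof.
have := proj1 tree D E; apply: connect_sub => F F' h; apply: connect1.
by move: h; rewrite /thetarel /glue (looprel_permrel wf0 vac0) inE andbT.
Qed.

(* In a tree every edge is a bridge: without vertex v (and the vertices
   outside S) its two dipoles are disconnected. *)
Lemma vertex_bridge S v : v \notin S ->
  ~~ connect (glue loopPerm S) (v,false) (v,true).
Proof.
move=> vS; apply/negP => c.
have same := ncomps_add_inner_edge (glue_sym loopPerm S) (glue_adds_edge loopPerm S v) c.
have low := ncomps_glue_mono loopPerm (sub0set S).
rewrite setD0 ncomps_glue0 card_loops in low.
have high := ncomps_glue_mono loopPerm (subsetT (v |: S)).
have one := ncomps_le1 (@glue_connected).
have card : #|S| + #|~: (v |: S)| + 1 = V.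
  by rewrite -[X in _ = X]card_ord -(cardsC (v |: S)) cardsU1 vS /=; lia.
by rewrite setTD same in high; lia.
Qed.

(* Each twisted vertex splits a face cycle. *)
Lemma card_face_cycles S : #|porbits (facePerm S)| + #|S| = V.+1.
Proof.
move e: #|S| => n; elim: n S e => [|n IH] S e.
  by move/eqP: e; rewrite cards_eq0 => /eqP ->; rewrite facePerm0 card_loops addn0.
have [v vS]: exists v, v \in S by apply/set0Pn; rewrite -card_gt0 e.
have defS: S = v |: (S :\ v) by rewrite setD1K.
have vS': v \notin S :\ v by rewrite !inE eqxx.
have e': #|S :\ v| = n by move: e; rewrite (cardsD1 v) vS add1n => -[].
have split := porbits_mul_tperm (facePerm (S :\ v)) (v,false) (v,true).
rewrite /= -facePerm_add // -defS in split.
have apart : ((v,false) \notin porbit (facePerm (S :\ v)) (v,true)) = true.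
  apply/negP => /porbit_facePerm_glue c.
  by move: (vertex_bridge vS'); rewrite glue_sym c.
have ne : ((v,false) != (v,true) :> dip V) by apply/eqP => -[].
rewrite apart ne /= in split.
move: split (IH _ e'); rewrite /nat_of_bool -addnn.
by move: #|porbits _| #|porbits _| => a b; lia.
Qed.

End TreeCount.

Section ClosedFaces.
Variables (V : nat) (G0 H : feyngraph V).
Hypotheses (wf0 : wf_graph G0) (vac0 : vacuum G0)
  (sub : forall x y, prop H x = Some y -> prop G0 x = Some y).
Variable j : 'I_6.
Implicit Types (x y : node V) (D E : dip V).

Local Notation loopPerm := (loopPerm wf0 vac0).
Local Notation twist := (twist (colour_set H j)).
Local Notation phi := (facePerm wf0 vac0 (colour_set H j)).

(* Faces of colour j of the vacuum graph G0 with the colouring of H; a node is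
   labelled by the dipole through which its face cycle passes at it. *)
Definition face0rel : rel (node V) :=
  fun x y => (y == cpart H j x) || (prop G0 x == Some y).
Definition face_key x : dip V := if black x then dip_of x else twist (dip_of x).
Definition nodes_over (O : {set dip V}) : {set node V} := [set y | face_key y \in O].

Lemma face_key_dblack D : face_key (dblack D) = D.
Proof. by rewrite /face_key black_dblack dip_of_dblack. Qed.

Lemma face_key_dwhite D : face_key (dwhite D) = twist D.
Proof. by rewrite /face_key black_dwhite dip_of_dwhite. Qed.

Lemma face_key_cpart x : face_key (cpart H j x) = face_key x.
Proof.
case bx: (black x).
  by rewrite -(dblackE bx) cpart_dblack face_key_dwhite face_key_dblack twistK.
by rewrite -(dwhiteE (negbT bx)) cpart_dwhite face_key_dwhite face_key_dblack.
Qed.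

Lemma facePerm_twist D : phi (twist D) = loopPerm D.
Proof. by rewrite facePermE twistK. Qed.

Lemma face0rel_sym : connect_sym face0rel.
Proof.
apply: sym_connect_sym => x y; rewrite /face0rel.
congr orb; first by apply/eqP/eqP => ->; rewrite cpartK.
by apply/eqP/eqP => /wf0 [].
Qed.

Lemma face0rel_porbit x y : face0rel x y -> porbit phi (face_key y) = porbit phi (face_key x).
Proof.
case/orP => [/eqP->|/eqP h]; first by rewrite face_key_cpart.
by case: (prop_cases wf0 vac0 h) => -[F [-> ->]];
  rewrite face_key_dblack face_key_dwhite -facePerm_twist porbit_next.
Qed.

Lemma face0_key x : connect face0rel x (dblack (face_key x)).
Proof.
case bx: (black x); first by rewrite /face_key bx dblackE // connect0.
have ex := dwhiteE (negbT bx); move: (dip_of x) ex => F <-.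
by apply: connect1; rewrite /face0rel face_key_dwhite cpart_dwhite eqxx.
Qed.

Lemma face0_step D : connect face0rel (dblack D) (dblack (phi D)).
Proof.
apply: (@connect_trans _ _ (dwhite (twist D))).
  by apply: connect1; rewrite /face0rel cpart_dblack eqxx.
by apply: connect1; rewrite /face0rel prop_white facePermE eqxx orbT.
Qed.

Lemma face0P x y : connect face0rel x y = (face_key y \in porbit phi (face_key x)).
Proof.
apply/idP/idP.
  apply: (connect_forward_ind (P := fun u => face_key u \in porbit phi (face_key x)));
    last exact: porbit_id.
  by move=> u w; rewrite -!eq_porbit_mem => /eqP <- /face0rel_porbit ->.
move=> h; apply: connect_trans (face0_key x) _.
rewrite face0rel_sym; apply: connect_trans (face0_key y) _; rewrite face0rel_sym.
case/porbitP: h => i ->; elim: i => [|i IH]; first by rewrite expg0 perm1 connect0.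
by apply: connect_trans IH _; rewrite expgSr permM; exact: face0_step.
Qed.

Lemma face0E x : [set y | connect face0rel x y] = nodes_over (porbit phi (face_key x)).
Proof. by apply/setP => y; rewrite !inE face0P. Qed.

Lemma facerel_face0 x y : connect (facerel H j) x y -> connect face0rel x y.
Proof.
apply: connect_sub => u w h; apply: connect1; move: h.
by rewrite /facerel /face0rel => /orP[->//|/eqP/sub ->]; rewrite eqxx orbT.
Qed.

Lemma facerel_extend x u w : connect (facerel H j) x u -> ~~ external H u ->
  face0rel u w -> connect (facerel H j) x w.
Proof.
move=> cu + /orP[/eqP->|/eqP pu].
  by move=> _; apply: connect_trans cu (connect1 _); rewrite /facerel eqxx.
rewrite /external; case hu: (prop H u) => [z|] // _; have := sub hu; rewrite pu => -[] ez.
by apply: connect_trans cu (connect1 _); rewrite /facerel hu ez eqxx orbT.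
Qed.

Lemma face_of_internal x : (forall y, connect face0rel x y -> ~~ external H y) ->
  face_of H j x = [set y | connect face0rel x y].
Proof.
move=> int; apply/setP => y; rewrite !inE; apply/idP/idP; first exact: facerel_face0.
apply: (connect_forward_ind (P := connect (facerel H j) x)); last exact: connect0.
by move=> u w cu; apply: facerel_extend cu (int _ (facerel_face0 cu)).
Qed.

Lemma closed_face_internal x : [forall y in face_of H j x, ~~ external H y] ->
  forall y, connect face0rel x y -> ~~ external H y.
Proof.
move=> /forall_inP int y cy; suff: y \in face_of H j x by exact: int.
rewrite inE.
apply: (connect_forward_ind (P := connect (facerel H j) x)) cy; last exact: connect0.
by move=> u w cu; apply: facerel_extend (cu) _; apply: int; rewrite inE.
Qed.

Definition ext_keys := [set face_key y | y in ext_nodes H].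

Lemma nodes_over_inj : injective nodes_over.
Proof.
move=> O O' e; apply/setP => D.
have: (dblack D \in nodes_over O) = (dblack D \in nodes_over O') by rewrite e.
by rewrite !inE face_key_dblack.
Qed.

Lemma internal_cycle D :
  (forall y, connect face0rel (dblack D) y -> ~~ external H y) <->
  [disjoint porbit phi D & ext_keys].
Proof.
split=> [int|/pred0P dis y cy].
  apply/pred0P => E /=; apply/negP => /andP[ED /imsetP[y]]; rewrite inE => ey eE.
  by move: (int y); rewrite face0P face_key_dblack -eE ey => /(_ ED).
apply/negP => ey; move: (dis (face_key y)) => /=.
by rewrite -(face_key_dblack D) -face0P cy imset_f // inE.
Qed.

Lemma closed_facesE :
  closed_faces_j H j = nodes_over @: [set O in porbits phi | [disjoint O & ext_keys]].
Proof.
apply/setP => C; rewrite inE; apply/existsP/imsetP => [[x /andP[/eqP -> hC]]|].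
  have int := closed_face_internal hC.
  exists (porbit phi (face_key x)); last by rewrite (face_of_internal int) face0E.
  rewrite inE imset_f //=; apply/internal_cycle => y cy.
  exact/int/(connect_trans (face0_key x) cy).
move=> [O]; rewrite inE => /andP[/imsetP[D _ ->] dis] ->.
have int : forall y, connect face0rel (dblack D) y -> ~~ external H y.
  exact/internal_cycle.
have e := face0E (dblack D); rewrite face_key_dblack in e.
exists (dblack D); rewrite (face_of_internal int) e eqxx /=.
by apply/forall_inP => y; rewrite -e inE; exact: int.
Qed.

Lemma card_closed_faces :
  #|closed_faces_j H j| = #|[set O in porbits phi | [disjoint O & ext_keys]]|.
Proof. by rewrite closed_facesE card_imset //; exact: nodes_over_inj. Qed.

End ClosedFaces.

Section OnePITadpoles.
Variables (V : nat) (G0 G : feyngraph V).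
Hypotheses (wf0 : wf_graph G0) (vac0 : vacuum G0) (tree : theta_tree G0)
  (wfG : wf_graph G) (sub : forall x y, prop G x = Some y -> prop G0 x = Some y).
Implicit Types (x y : node V) (D E F : dip V).

Local Notation loopPerm := (loopPerm wf0 vac0).

Lemma ext_white_black D : external G (dwhite D) -> external G (dblack (loopPerm D)).
Proof.
rewrite /external => /eqP hw; apply/eqP; case h: (prop G _) => [z|] //.
have := sub h; rewrite prop_black => -[ez]; subst z.
by have [] := wfG h; rewrite hw.
Qed.

Lemma ext_black_white D : external G (dblack (loopPerm D)) -> external G (dwhite D).
Proof.
rewrite /external => /eqP hw; apply/eqP; case h: (prop G _) => [z|] //.
have := sub h; rewrite prop_white => -[ez]; subst z.
by have [] := wfG h; rewrite hw.
Qed.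

(* The loop permutation with the dotted edge leaving D and the one leaving
   loopPerm D reconnected crosswise. *)
Definition cutPerm D : {perm dip V} := (tperm D (loopPerm D) * loopPerm)%g.

Lemma cutPermE D F : F != D -> F != loopPerm D -> cutPerm D F = loopPerm F.
Proof. by move=> FD FE; rewrite permM tpermD // eq_sym. Qed.

Lemma card_cutPerm D : loopPerm D != D -> #|porbits (cutPerm D)| = V.+2.
Proof.
move=> neD; have := porbits_mul_tperm loopPerm D (loopPerm D); rewrite /= -/(cutPerm D).
have -> : (D \notin porbit loopPerm (loopPerm D)) = false.
  by rewrite porbit_sym; have := mem_porbit loopPerm 1 D; rewrite expg1 => ->.
by rewrite (card_loops wf0 vac0 tree) eq_sym neD /nat_of_bool /= double0 addn0 addn1.
Qed.

Lemma no_connection_without D (R : rel (node V)) :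
  external G (dwhite D) -> loopPerm D != D -> (forall x y, connect R x y) ->
  (forall x y, R x y -> (x.1 == y.1) \/
     (prop G x = Some y /\
      ~~ ((x == dwhite (loopPerm D)) && (y == dblack (loopPerm (loopPerm D)))) /\
      ~~ ((x == dblack (loopPerm (loopPerm D))) && (y == dwhite (loopPerm D))))) ->
  False.
Proof.
move=> extD neD conn edges.
have step x y : R x y -> glue (cutPerm D) setT (dip_of x) (dip_of y).
  move/edges => [e|[pxy [n1 n2]]]; first by rewrite /glue inE e orbT.
  have FD F z : prop G (dwhite F) = Some z -> F != D.
    by move=> wF; apply/eqP => eF; subst F; move: extD; rewrite /external wF.
  rewrite /glue /permrel; case: (prop_cases wf0 vac0 (sub pxy)) => -[F [ex ey]]; subst x y;
    rewrite dip_of_dwhite dip_of_dblack.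
  - rewrite cutPermE ?eqxx ?orbT ?(FD _ _ pxy) //.
    by apply/eqP => eF; subst F; rewrite !eqxx in n1.
  - have [wF _] := wfG pxy.
    rewrite (@cutPermE D F) ?eqxx ?orbT ?(FD _ _ wF) //.
    by apply/eqP => eF; subst F; rewrite !eqxx in n2.
have all : forall X Y, connect (glue (cutPerm D) setT) X Y.
  move=> X Y; rewrite -(dip_of_dblack X) -(dip_of_dblack Y).
  by apply: (connect_map (e := R)) => // x y /step /connect1.
by move: (porbits_connected all); rewrite card_cutPerm // ltnn.
Qed.

Lemma ext_white_tadpole D : onePI G -> external G (dwhite D) -> loopPerm D = D.
Proof.
move=> [conn cut] extD; apply/eqP; apply: contraT => neD; exfalso.
case extE: (external G (dwhite (loopPerm D))).
  apply: (no_connection_without (R := Defs.grel G) extD neD conn) => x y /orP[e|/eqP pxy].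
    by left.
  right; split => //; split; apply/negP => /andP[/eqP ex /eqP ey]; subst x y.
    by move: extE; rewrite /external pxy.
  by move: (ext_white_black extE); rewrite /external pxy.
have pE : prop G (dwhite (loopPerm D)) = Some (dblack (loopPerm (loopPerm D))).
  move: extE; rewrite /external; case h: (prop G _) => [z|] // _.
  by have := sub h; rewrite prop_white.
apply: (no_connection_without extD neD (cut _ _ pE)) => x y /orP[e|/andP[/eqP pxy]].
  by left.
by rewrite negb_or => /andP[h1 h2]; right.
Qed.

End OnePITadpoles.

Lemma iter_mod (T : Type) (f : T -> T) a n k :
  iter n.+1 f a = a -> iter k f a = iter (k %% n.+1) f a.
Proof.
move=> per; rewrite {1}(divn_eq k n.+1) addnC iterD; congr (iter _ f _).
by elim: (k %/ n.+1) => [|q IH]; rewrite ?mul0n // mulSn iterD IH per.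
Qed.

Section OpenFaces.
Variables (V : nat) (G0 G : feyngraph V).
Hypotheses (wf0 : wf_graph G0) (vac0 : vacuum G0) (wfG : wf_graph G)
  (sub : forall x y, prop G x = Some y -> prop G0 x = Some y).
Variable Ext : {set dip V}.
Hypotheses (ext_tadpole : forall D, D \in Ext -> loopPerm wf0 vac0 D = D)
  (externalE : forall x, external G x = (dip_of x \in Ext)).
Variable j : 'I_6.
Implicit Types (x y : node V) (D E F : dip V).

Local Notation loopPerm := (loopPerm wf0 vac0).
Local Notation twist := (twist (colour_set G j)).
Local Notation phi := (facePerm wf0 vac0 (colour_set G j)).
Local Notation psi := (phi^-1)%g.
Local Notation face_key := (face_key G j).

(* D is the head of E: going backwards along the face cycle of E, D is the
   first external dipole met; the open face through E starts at D. *)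
Definition face_head E D := D \in Ext /\
  exists n, iter n psi E = D /\ forall i, i < n -> iter i psi E \notin Ext.

Lemma face_head_uniq E D D' : face_head E D -> face_head E D' -> D = D'.
Proof.
move=> [dD [n [e1 h1]]] [dD' [n' [e2 h2]]].
case: (ltngtP n n') => [lt|lt|eq]; last by rewrite -e1 -e2 eq.
  by move: (h2 _ lt); rewrite e1 dD.
by move: (h1 _ lt); rewrite e2 dD'.
Qed.

Lemma face_head_refl D : D \in Ext -> face_head D D.
Proof. by move=> dD; split => //; exists 0. Qed.

Lemma face_head_exists E n : iter n psi E \in Ext -> exists D, face_head E D.
Proof.
move=> h; have exP : exists n, iter n psi E \in Ext by exists n.
case: (ex_minnP exP) => m Pm minm; exists (iter m psi E); split => //.
exists m; split => // i lt; apply/negP => Pi; move: (minm _ Pi).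
by rewrite leqNgt lt.
Qed.

Lemma facePerm_not_ext E : twist E \notin Ext -> phi E \notin Ext.
Proof.
move=> tE; apply/negP => pE.
have e : phi E = twist E by apply: (@perm_inj _ loopPerm); rewrite (ext_tadpole pE) facePermE.
by move: tE; rewrite -e pE.
Qed.

Lemma face_head_fwd E D : twist E \notin Ext -> face_head E D -> face_head (phi E) D.
Proof.
move=> tE [dD [n [e h]]]; split => //; exists n.+1; split; first by rewrite iterSr permK.
case=> [_|i lt]; first exact: facePerm_not_ext.
by rewrite iterSr permK; apply: h.
Qed.

Lemma face_head_bwd E D : twist E \notin Ext -> face_head (phi E) D -> face_head E D.
Proof.
move=> tE [dD [[|n] [e h]]].
  by move: (facePerm_not_ext tE); rewrite /= in e; rewrite e dD.
split => //; exists n; split; first by rewrite -e iterSr permK.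
by move=> i lt; move: (h i.+1 lt); rewrite iterSr permK.
Qed.

Lemma internal_white F : F \notin Ext -> prop G (dwhite F) = Some (dblack (loopPerm F)).
Proof.
move=> nF; move: (externalE (dwhite F)); rewrite dip_of_dwhite (negbTE nF) /external.
by case h: (prop G _) => [z|] // _; rewrite -(sub h) prop_white.
Qed.

Lemma facerel_sym : connect_sym (facerel G j).
Proof.
apply: sym_connect_sym => x y; rewrite /facerel; congr orb.
  by apply/eqP/eqP => ->; rewrite cpartK.
by apply/eqP/eqP => /wfG [].
Qed.

Lemma face_head_facerel u w D :
  facerel G j u w -> face_head (face_key u) D -> face_head (face_key w) D.
Proof.
case/orP => [/eqP->|/eqP h]; first by rewrite face_key_cpart.
case: (prop_cases wf0 vac0 (sub h)) => -[F [eu ew]]; subst u w.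
  have nF : F \notin Ext by rewrite -(dip_of_dwhite F) -externalE /external h.
  rewrite face_key_dwhite face_key_dblack -(facePerm_twist G wf0 vac0 j).
  by apply: face_head_fwd; rewrite twistK.
have nF : F \notin Ext.
  by rewrite -(dip_of_dwhite F) -externalE /external (proj1 (wfG h)).
rewrite face_key_dwhite face_key_dblack -(facePerm_twist G wf0 vac0 j).
by apply: face_head_bwd; rewrite twistK.
Qed.

Lemma connect_face_head x y D :
  connect (facerel G j) x y -> face_head (face_key x) D -> face_head (face_key y) D.
Proof.
move=> c hx; apply: (connect_forward_ind (P := fun u => face_head (face_key u) D)) c => //.
by move=> u w hu f; exact: face_head_facerel f hu.
Qed.

Lemma face_head_connect E D :
  face_head E D -> connect (facerel G j) (dblack D) (dblack E).
Proof.
move=> [dD [n [e h]]]; elim: n E e h => [|n IH] E e h; first by rewrite -e connect0.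
have e' : iter n psi (psi E) = D by rewrite -iterSr.
have h' : forall i, i < n -> iter i psi (psi E) \notin Ext.
  by move=> i lt; rewrite -iterSr; apply: h.
apply: connect_trans (IH _ e' h') _.
have tE : twist (psi E) \notin Ext.
  apply/negP => tin; have : phi (psi E) \in Ext by rewrite facePermE ext_tadpole.
  by rewrite permKV => EExt; move: (h 0 isT); rewrite /= EExt.
rewrite -{2}(permKV phi E); apply: (@connect_trans _ _ (dwhite (twist (psi E)))).
  by apply: connect1; rewrite /facerel cpart_dblack eqxx.
by apply: connect1; rewrite /facerel internal_white // facePermE eqxx orbT.
Qed.

Lemma face_key_connect x : connect (facerel G j) x (dblack (face_key x)).
Proof.
case bx: (black x); first by rewrite /face_key bx dblackE // connect0.
have ex := dwhiteE (negbT bx); move: (dip_of x) ex => F <-.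
by apply: connect1; rewrite /facerel face_key_dwhite cpart_dwhite eqxx.
Qed.

Lemma ext_face_head x : external G x -> exists D, face_head (face_key x) D.
Proof.
rewrite externalE => xD; rewrite /face_key; case bx: (black x).
  by exists (dip_of x); exact: face_head_refl.
have : dip_of x \in porbit psi (twist (dip_of x)).
  rewrite porbitV; have := mem_porbit phi 1 (twist (dip_of x)).
  by rewrite expg1 facePermE twistK ext_tadpole.
by case/porbit_iter => n e; apply: (face_head_exists (n := n)); rewrite e.
Qed.

Lemma face_of_mem x y : y \in face_of G j x -> face_of G j y = face_of G j x.
Proof.
rewrite inE => cxy; apply/setP => z; rewrite !inE; apply/idP/idP; first exact: connect_trans.
by apply: connect_trans; rewrite facerel_sym.
Qed.

Lemma face_of_head x D : face_head (face_key x) D -> face_of G j x = face_of G j (dblack D).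
Proof.
move=> hD; apply: face_of_mem; rewrite inE.
by apply: connect_trans (face_head_connect hD) _; rewrite facerel_sym face_key_connect.
Qed.

Lemma card_open_faces : #|open_faces_j G j| = #|Ext|.
Proof.
have -> : open_faces_j G j = (fun D => face_of G j (dblack D)) @: Ext.
  apply/setP => C; rewrite inE; apply/existsP/imsetP.
    case=> x /andP[/eqP -> /existsP[y /andP[yC ey]]].
    have [D hD] := ext_face_head ey; exists D; first exact: (proj1 hD).
    by rewrite -(face_of_head hD) (face_of_mem yC).
  case=> D dD ->; exists (dblack D); rewrite eqxx /=; apply/existsP; exists (dblack D).
  by rewrite !inE connect0 externalE dip_of_dblack.
rewrite card_in_imset // => D D' dD dD' e.
have : dblack D' \in face_of G j (dblack D) by rewrite e inE connect0.
rewrite inE => /connect_face_head; rewrite !face_key_dblack => /(_ _ (face_head_refl dD)) h.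
exact: face_head_uniq h (face_head_refl dD').
Qed.

Lemma iter_face_step n x z : iter n (face_step G j) (Some x) = Some z ->
  connect (facerel G j) x z /\ black z = black x.
Proof.
elim: n z => [|n IH] z /=; first by case=> <-; split => //; exact: connect0.
case h: (iter n _ _) => [z0|] //= hz.
have [c b] := IH _ h; split.
  apply: connect_trans c _; apply: (@connect_trans _ _ (cpart G j z0)); apply: connect1.
    by rewrite /facerel eqxx.
  by rewrite /facerel hz eqxx orbT.
have [_ bb] := wfG hz; move: bb; rewrite cpart_black b.
by case: (black x); case: (black z).
Qed.

Lemma face_connects_ends x y : face_connects G j x y ->
  connect (facerel G j) x y /\ black y = ~~ black x.
Proof.
move=> [_ [n [z [h [<- _]]]]]; have [c b] := iter_face_step h; split.
  by apply: connect_trans c (connect1 _); rewrite /facerel eqxx.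
by rewrite cpart_black b.
Qed.

(* If another external dipole E lies on the face cycle of D, the open face
   starting at D ends before coming back to D: it never joins the two nodes
   of D. *)
Lemma open_face_no_return D E : D \in Ext -> E \in Ext -> E != D -> E \in porbit phi D ->
  ~~ connect (facerel G j) (dblack D) (dwhite D).
Proof.
move=> dD dE ne EO; apply/negP => c.
have hD : face_head (face_key (dblack D)) D by rewrite face_key_dblack; exact: face_head_refl.
have := connect_face_head c hD; rewrite face_key_dwhite => -[_ [n [e h]]].
have pt : phi (twist D) = D by rewrite (facePerm_twist G wf0 vac0 j) ext_tadpole.
have per : iter n.+1 psi (twist D) = twist D by rewrite iterS e -{1}pt permK.
have : E \in porbit psi (twist D) by rewrite porbitV -porbit_next pt.
case/porbit_iter => k; rewrite (iter_mod k per) => ek.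
have : k %% n.+1 < n.+1 by rewrite ltn_pmod.
rewrite ltnS leq_eqVlt => /orP[/eqP r|r].
  by move: ne; rewrite -ek r e eqxx.
by move: (h _ r); rewrite ek dE.
Qed.

End OpenFaces.

Lemma card_set_sum (T : finType) (P : pred T) : #|[set x | P x]| = \sum_x P x.
Proof.
rewrite -sum1_card big_mkcond /=; apply: eq_bigr => x _.
by rewrite inE; case: (P x).
Qed.

Lemma sum_eq1 (I : finType) (c : I) : \sum_i (i == c) = 1.
Proof. by rewrite (bigD1 c) // eqxx big1 ?addn0 // => i /negbTE ->. Qed.

Lemma sum_neq (I : finType) (c : I) : \sum_i (i != c) = #|I|.-1.
Proof.
have : \sum_i ((i == c) + (i != c)) = #|I|.
  rewrite (eq_bigr (fun _ => 1)); first by rewrite sum_nat_const muln1.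
  by move=> i _; case: (i == c).
by rewrite big_split sum_eq1 => <-.
Qed.

Lemma sum_ge1 (I : finType) (f : I -> nat) a : f a <= \sum_i f i.
Proof. by rewrite (bigD1 a) //= leq_addr. Qed.

Lemma sum_ge2 (I : finType) (f : I -> nat) a b : a != b -> f a + f b <= \sum_i f i.
Proof.
move=> ab; rewrite (bigD1 a) // leq_add2l (bigD1 b) /=; first exact: leq_addr.
by rewrite eq_sym.
Qed.

Lemma card_split (T : finType) (A : {set T}) (P : pred T) :
  #|[set x in A | P x]| + #|[set x in A | ~~ P x]| = #|A|.
Proof.
rewrite -(cardsID [set x | P x] A); congr (_ + _); apply: eq_card => x; rewrite !inE //.
by rewrite andbC.
Qed.

Section MelonicCount.
Variables (V : nat) (G G0 : feyngraph V).
Hypotheses (wfG : wf_graph G) (wf0 : wf_graph G0) (vac0 : vacuum G0)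
  (tree : theta_tree G0) (sub : forall x y, prop G x = Some y -> prop G0 x = Some y)
  (pi : onePI G).
Implicit Types (x y : node V) (D E F : dip V).

Local Notation loopPerm := (loopPerm wf0 vac0).

Definition extDip := [set D | external G (dwhite D)].

Lemma extDip_tadpole D : D \in extDip -> loopPerm D = D.
Proof. by rewrite inE; exact: (ext_white_tadpole wf0 vac0 tree wfG sub pi). Qed.

Lemma externalE x : external G x = (dip_of x \in extDip).
Proof.
case bx: (black x); last by rewrite -{1}(dwhiteE (negbT bx)) inE.
rewrite -{1}(dblackE bx); move: (dip_of x) => D; apply/idP/idP => h.
  have e : loopPerm ((loopPerm^-1)%g D) = D by rewrite permKV.
  have := @ext_black_white _ G0 G wf0 vac0 wfG sub ((loopPerm^-1)%g D).
  rewrite e => /(_ h) h'; have hD : (loopPerm^-1)%g D \in extDip by rewrite inE.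
  by move: (extDip_tadpole hD); rewrite e => ->.
have := ext_white_black wf0 vac0 wfG sub (D := D); rewrite extDip_tadpole //.
by apply; rewrite inE in h.
Qed.

Lemma ext_nodesE : ext_nodes G = (@dblack V) @: extDip :|: (@dwhite V) @: extDip.
Proof.
apply/setP => x; rewrite in_setU inE externalE.
have bw D : (dblack D \in (@dwhite V) @: extDip) = false.
  by apply/imsetP => -[F _ /eqP]; rewrite (negbTE (dblack_dwhite _ _)).
have wb D : (dwhite D \in (@dblack V) @: extDip) = false.
  by apply/imsetP => -[F _ /esym/eqP]; rewrite (negbTE (dblack_dwhite _ _)).
case bx: (black x).
  by rewrite -(dblackE bx) dip_of_dblack bw (mem_imset _ _ (@dblack_inj V)) orbF.
by rewrite -(dwhiteE (negbT bx)) dip_of_dwhite wb (mem_imset _ _ (@dwhite_inj V)).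
Qed.

Lemma card_ext_nodes : #|ext_nodes G| = #|extDip|.*2.
Proof.
rewrite ext_nodesE cardsU !card_imset; try (exact: dblack_inj || exact: dwhite_inj).
suff -> : (@dblack V) @: extDip :&: (@dwhite V) @: extDip = set0 by rewrite cards0 subn0 addnn.
apply/setP => x; rewrite !inE; apply/negP => /andP[/imsetP[D _ ->] /imsetP[E _ e]].
by move: (dblack_dwhite D E); rewrite e eqxx.
Qed.

Local Notation phi j := (facePerm wf0 vac0 (colour_set G j)).

Lemma ext_keys_extDip j D : D \in extDip -> D \in ext_keys G j.
Proof.
move=> dD; apply/imsetP; exists (dblack D); last by rewrite face_key_dblack.
by rewrite inE externalE dip_of_dblack.
Qed.

Definition hit_cycles j := [set O in porbits (phi j) | ~~ [disjoint O & ext_keys G j]].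

Lemma closed_hit_colour j :
  #|closed_faces_j G j| + #|hit_cycles j| + #|colour_set G j| = V.+1.
Proof.
rewrite (card_closed_faces wf0 vac0 sub j) card_split.
exact: (card_face_cycles wf0 vac0 tree).
Qed.

Definition fixed_cycles j := porbit (phi j) @: [set D in extDip | j != vcol G D.1].
Definition twisted_cycles j := porbit (phi j) @: [set D in extDip | j == vcol G D.1].

Lemma facePerm_fixed j D : D \in extDip -> j != vcol G D.1 -> phi j D = D.
Proof. by move=> dD ne; rewrite facePermE /twist inE (negbTE ne) extDip_tadpole. Qed.

Lemma porbit_flipd j D : D \in extDip -> j == vcol G D.1 -> flipd D \in porbit (phi j) D.
Proof.
move=> dD e; rewrite porbit_sym.
have := mem_porbit (phi j) 1 (flipd D); rewrite expg1 facePermE /twist inE /flipd /= e.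
by rewrite negbK -surjective_pairing extDip_tadpole.
Qed.

Lemma hit_cycles_ge j : #|fixed_cycles j| + #|twisted_cycles j| <= #|hit_cycles j|.
Proof.
have dis : fixed_cycles j :&: twisted_cycles j = set0.
  apply/setP => O; rewrite !inE; apply/negP => /andP[/imsetP[D] + ->].
  rewrite inE => /andP[dD ne] /imsetP[E]; rewrite inE => /andP[dE eq] e.
  have := porbit_flipd dE eq; have := porbit_id (phi j) E.
  rewrite -e (porbit_fixed (facePerm_fixed dD ne)) !inE => /eqP e1 /eqP e2.
  by move: (flipd_neq E); rewrite e2 e1 eqxx.
have -> : #|fixed_cycles j| + #|twisted_cycles j| = #|fixed_cycles j :|: twisted_cycles j|.
  by rewrite cardsU dis cards0 subn0.
apply: subset_leq_card.
have hit D : D \in extDip -> porbit (phi j) D \in hit_cycles j.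
  move=> dD; rewrite inE imset_f //=; apply/negP => /pred0P /(_ D).
  by rewrite /= porbit_id ext_keys_extDip.
by apply/subsetP => O; rewrite in_setU => /orP[] /imsetP[D]; rewrite inE => /andP[/hit + _] ->.
Qed.

Lemma card_fixed_cycles j : #|fixed_cycles j| = #|[set D in extDip | j != vcol G D.1]|.
Proof.
apply: card_in_imset => D E; rewrite !inE => /andP[dD nD] /andP[dE nE].
rewrite (porbit_fixed (facePerm_fixed _ nD)) ?(porbit_fixed (facePerm_fixed _ nE)) ?inE //.
exact: set1_inj.
Qed.

(* Each external dipole is fixed by the five colours it is joined by. *)
Lemma sum_fixed_cycles : \sum_(j < 6) #|fixed_cycles j| = 5 * #|extDip|.
Proof.
rewrite (eq_bigr (fun j => \sum_D ((D \in extDip) && (j != vcol G D.1)))); last first.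
  by move=> j _; rewrite card_fixed_cycles card_set_sum.
have -> : #|extDip| = \sum_D (D \in extDip).
  by rewrite -card_set_sum; apply: eq_card => D; rewrite inE.
rewrite exchange_big /= big_distrr /=; apply: eq_bigr => D _.
case: (D \in extDip) => /=; last by rewrite muln0 big1.
by rewrite muln1 sum_neq card_ord.
Qed.

Lemma sum_colour_sets : \sum_(j < 6) #|colour_set G j| = V.
Proof.
rewrite (eq_bigr (fun j => \sum_v (j == vcol G v))); last first.
  by move=> j _; rewrite card_set_sum.
rewrite exchange_big /= (eq_bigr (fun _ => 1)); last by move=> v _; rewrite sum_eq1.
by rewrite sum_nat_const card_ord muln1.
Qed.

(* The excess counts the cycles through external dipoles of their own colour;
   it is at least 1 per colour class of external dipoles. *)
Definition excess := \sum_(j < 6) #|twisted_cycles j|.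

Lemma closed_faces_upper : n_closed_faces G + 5 * #|extDip| + excess + V <= 6 * V.+1.
Proof.
have total : \sum_(j < 6) (#|closed_faces_j G j| + #|hit_cycles j| + #|colour_set G j|)
    = 6 * V.+1.
  by rewrite (eq_bigr (fun _ => V.+1)) ?sum_nat_const ?card_ord // => j _; exact: closed_hit_colour.
have hit : \sum_(j < 6) (#|fixed_cycles j| + #|twisted_cycles j|) <= \sum_(j < 6) #|hit_cycles j|.
  by apply: leq_sum => j _; exact: hit_cycles_ge.
rewrite !big_split /= sum_colour_sets in total; rewrite big_split /= sum_fixed_cycles in hit.
rewrite /n_closed_faces /excess; move: total hit.
by move: (\sum_(j < 6) _) (\sum_(j < 6) #|hit_cycles j|) (\sum_(j < 6) #|twisted_cycles j|); lia.
Qed.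

(* The competitor: G with every vertex recoloured by the first colour. *)
Definition monochrome : feyngraph V := FGraph (fun _ : 'I_V => (ord0 : 'I_6)) (prop G).

Lemma colour_set_monochrome j : j != ord0 -> colour_set monochrome j = set0.
Proof. by move=> nj; apply/setP => v; rewrite !inE /=; exact: negbTE. Qed.

Lemma ext_keys_monochrome j : j != ord0 -> ext_keys monochrome j = extDip.
Proof.
move=> nj; apply/setP => D; apply/imsetP/idP => [[y ey ->]|dD].
  have ey' : external G y by move: ey; rewrite inE.
  by rewrite /face_key colour_set_monochrome // twist0 if_same -externalE.
exists (dblack D); last by rewrite face_key_dblack.
by rewrite inE; change (external G (dblack D)); rewrite externalE dip_of_dblack.
Qed.

(* For the other colours no vertex is twisted: its closed faces are the loop
   vertices of G0 other than the tadpoles of external dipoles. *)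
Lemma closed_faces_monochrome j : j != ord0 ->
  #|closed_faces_j monochrome j| + #|extDip| = V.+1.
Proof.
move=> nj; rewrite (@card_closed_faces _ G0 monochrome wf0 vac0 sub j).
rewrite ext_keys_monochrome // colour_set_monochrome // facePerm0.
rewrite -(card_loops wf0 vac0 tree).
rewrite -(card_split (porbits loopPerm) (fun O => [disjoint O & extDip])).
congr (_ + _).
have -> : [set O in porbits loopPerm | ~~ [disjoint O & extDip]] = (@set1 (dip V)) @: extDip.
  apply/setP => O; rewrite inE; apply/andP/imsetP => [[/imsetP[X _ ->] nd]|[D dD ->]].
    case/pred0Pn: nd => D /andP[/= DO dD]; exists D => //.
    have : porbit loopPerm D = porbit loopPerm X by apply/eqP; rewrite eq_porbit_mem.
    by move=> <-; rewrite (porbit_fixed (extDip_tadpole dD)).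
  rewrite -(porbit_fixed (extDip_tadpole dD)); split; first exact: imset_f.
  by apply/pred0Pn; exists D; rewrite /= porbit_id dD.
by rewrite card_imset //; exact: set1_inj.
Qed.

Lemma closed_faces_monochrome_lower : 5 * V.+1 <= n_closed_faces monochrome + 5 * #|extDip|.
Proof.
have five k : \sum_(j < 6 | j != ord0) k = 5 * k by rewrite sum_nat_const cardC1 card_ord.
have h : \sum_(j < 6 | j != ord0) (#|closed_faces_j monochrome j| + #|extDip|) = 5 * V.+1.
  by rewrite -five; apply: eq_bigr => j nj; exact: closed_faces_monochrome.
rewrite big_split /= five in h; rewrite /n_closed_faces (bigD1 ord0) //= -h.
by rewrite -addnA leq_addl.
Qed.

Hypothesis optimal : forall G' : feyngraph V, wf_graph G' -> from_tree G' -> connected G' ->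
  #|ext_nodes G'| = #|ext_nodes G| -> n_closed_faces G' <= n_closed_faces G.

Lemma monochrome_le : n_closed_faces monochrome <= n_closed_faces G.
Proof.
apply: optimal => //; last exact: (proj1 pi).
exists (FGraph (fun _ : 'I_V => (ord0 : 'I_6)) (prop G0)).
by split; [exact: wf0 | split; [exact: vac0 | split; [exact: tree | split]]].
Qed.

Lemma excess_le1 : excess <= 1.
Proof.
have := closed_faces_upper; have := closed_faces_monochrome_lower; have := monochrome_le.
by move: (n_closed_faces G) (n_closed_faces monochrome); lia.
Qed.

Lemma twisted_cycle_mem F :
  F \in extDip -> porbit (phi (vcol G F.1)) F \in twisted_cycles (vcol G F.1).
Proof. by move=> dF; apply: imset_f; rewrite inE dF eqxx. Qed.

Lemma ext_uniform D E : D \in extDip -> E \in extDip ->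
  vcol G D.1 = vcol G E.1 /\ porbit (phi (vcol G D.1)) D = porbit (phi (vcol G D.1)) E.
Proof.
move=> dD dE; have ex1 := excess_le1.
case: (eqVneq (vcol G D.1) (vcol G E.1)) => [ec|nc].
  split => //; apply/eqP; apply: contraT => ne; exfalso.
  have two : [set porbit (phi (vcol G D.1)) D; porbit (phi (vcol G D.1)) E]
      \subset twisted_cycles (vcol G D.1).
    apply/subsetP => O; rewrite !inE => /orP[]/eqP->; first exact: twisted_cycle_mem.
    by rewrite ec; exact: twisted_cycle_mem.
  have := subset_leq_card two; rewrite cards2 ne => h2.
  have := sum_ge1 (fun j => #|twisted_cycles j|) (vcol G D.1); rewrite -/excess => h3.
  by move: (leq_trans h2 (leq_trans h3 ex1)).
exfalso; have := sum_ge2 (fun j => #|twisted_cycles j|) nc; rewrite -/excess => h.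
have b1 : 0 < #|twisted_cycles (vcol G D.1)| by apply/card_gt0P; eexists; exact: twisted_cycle_mem.
have b2 : 0 < #|twisted_cycles (vcol G E.1)| by apply/card_gt0P; eexists; exact: twisted_cycle_mem.
by move: (leq_trans (leq_add b1 b2) (leq_trans h ex1)).
Qed.

Definition ext_colour : 'I_6 := if [pick D in extDip] is Some D then vcol G D.1 else ord0.

Lemma ext_colourE D : D \in extDip -> vcol G D.1 = ext_colour.
Proof.
move=> dD; rewrite /ext_colour; case: pickP => [D1 dD1|none].
  exact: (proj1 (ext_uniform dD dD1)).
by move: (none D); rewrite dD.
Qed.

Lemma ext_same_cycle D E : D \in extDip -> E \in extDip -> E \in porbit (phi ext_colour) D.
Proof.
by move=> dD dE; have [_ e] := ext_uniform dD dE; rewrite -(ext_colourE dD) e porbit_id.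
Qed.

Definition ext_pairs : {set node V * node V} := [set (dblack D, dwhite D) | D in extDip].

Lemma ext_pairs_dipoles p : p \in ext_pairs ->
  dipole G ext_colour p.1 p.2 /\ external G p.1 /\ external G p.2.
Proof.
case/imsetP => D dD -> /=; split; last by rewrite !externalE dip_of_dblack dip_of_dwhite dD.
split; [exact: black_dblack | split; first by rewrite black_dwhite].
move=> k nk; rewrite cpart_dblack /twist inE.
by rewrite (ext_colourE dD) (negbTE nk).
Qed.

Lemma ext_pairs_cover x : external G x ->
  #|[set p in ext_pairs | (p.1 == x) || (p.2 == x)]| = 1.
Proof.
rewrite externalE => ex.
suff -> : [set p in ext_pairs | (p.1 == x) || (p.2 == x)] =
          [set (dblack (dip_of x), dwhite (dip_of x))].
  exact: cards1.
apply/setP => p; rewrite in_set in_set1; apply/andP/eqP => [[/imsetP[E dE ->] /= h]|->].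
  by case/orP: h => /eqP <-; rewrite ?dip_of_dblack ?dip_of_dwhite.
split; first exact: imset_f.
rewrite /=; case bx: (black x); first by rewrite dblackE // eqxx.
by rewrite dwhiteE ?bx // eqxx orbT.
Qed.

Lemma card_ext_pairs : #|ext_pairs| = #|extDip|.
Proof. by rewrite card_imset // => D E /(congr1 fst) /= /dblack_inj. Qed.

Lemma open_face_ends_apart x y p q : 1 < #|extDip| ->
  face_connects G ext_colour x y -> p \in ext_pairs -> q \in ext_pairs ->
  (x == p.1) || (x == p.2) -> (y == q.1) || (y == q.2) -> p != q.
Proof.
move=> two fc /imsetP[D dD ->] /imsetP[D' dD' ->] hx hy.
apply/eqP => /(congr1 fst) /= /dblack_inj eD; subst D'.
have [c b] := face_connects_ends wfG fc.
have joins : connect (facerel G ext_colour) (dblack D) (dwhite D).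
  move: hx hy c b => /= /orP[]/eqP-> /orP[]/eqP->; rewrite ?black_dblack ?black_dwhite //.
  by rewrite facerel_sym.
have : 0 < #|extDip :\ D| by move: two; rewrite (cardsD1 D) dD.
case/card_gt0P => E; rewrite in_setD1 => /andP[ne dE].
have := open_face_no_return wfG sub extDip_tadpole externalE dD dE ne (ext_same_cycle dD dE).
by rewrite joins.
Qed.

End MelonicCount.

Theorem mainTheorem6 (V N : nat) (G : feyngraph V) :
  wf_graph G -> melonic G -> onePI G -> 1 < V -> #|ext_nodes G| = N.*2 ->
  exists (j : 'I_6) (P : {set node V * node V}),
    [/\ forall p, p \in P -> dipole G j p.1 p.2 /\ external G p.1 /\ external G p.2,
        forall x, external G x -> #|[set p in P | (p.1 == x) || (p.2 == x)]| = 1,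
        #|P| = N,
        #|open_faces_j G j| = N &
        (1 < N -> forall x y, face_connects G j x y ->
           forall p q, p \in P -> q \in P ->
             (x == p.1) || (x == p.2) -> (y == q.1) || (y == q.2) -> p != q)].
Proof.
move=> wfG [_ [[G0 [wf0 [vac0 [tree [_ sub]]]]] optimal]] pi _ cardN.
have N_ext : N = #|extDip G|.
  by apply: double_inj; rewrite -cardN (card_ext_nodes wfG wf0 vac0 tree sub pi).
exists (ext_colour G), (ext_pairs G); split.
- exact: (ext_pairs_dipoles wfG wf0 vac0 tree sub pi optimal).
- exact: (ext_pairs_cover wfG wf0 vac0 tree sub pi).
- by rewrite card_ext_pairs N_ext.
- rewrite N_ext; apply: (card_open_faces wfG sub).
    exact: (extDip_tadpole wfG wf0 vac0 tree sub pi).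
  exact: (externalE wfG wf0 vac0 tree sub pi).
- rewrite N_ext => two x y fc p q.
  exact: (open_face_ends_apart wfG wf0 vac0 tree sub pi optimal two fc).
Qed.
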